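(* For every integer $t\ge1$, $$-\frac{1}{8t^2}<\frac{S_1(t)}{(-1)^t\binom{-3/2}{t}}-\frac{(-1)^t}{\binom{-3/2}{t}}\bigl(\cosh\alpha-1\bigr)+\frac{\alpha\sinh\alpha}{2t}<\frac{13}{25t^2}.$$
   Context: $\alpha=\pi/6$. $(a)_m=a(a+1)\cdots(a+m-1)$ is the rising factorial ($(a)_0=1$); $\binom{x}{m}=x(x-1)\cdots(x-m+1)/m!$. For $t\ge0$, $$S_1(t)=\sum_{s=1}^t\frac{(-1)^s(1/2-s)_{s+1}}{s}\sum_{u=1}^s\frac{(-1)^u(-s)_u}{(s+u)!\,(2u-1)!}\left(\frac{\pi^2}{36}\right)^u.$$ *)

From Stdlib Require Import Reals List Arith Factorial.
Import ListNotations.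
Open Scope R_scope.

(* sum_{k=m}^{n} f k  (empty, i.e. 0, when n < m) *)
Definition sumR (m n : nat) (f : nat -> R) : R :=
  fold_right Rplus 0 (map f (seq m (S n - m))).

Fixpoint prodR (m : nat) (f : nat -> R) : R :=
  match m with
  | O => 1
  | S m' => prodR m' f * f m'
  end.

Definition rising (a : R) (m : nat) : R := prodR m (fun k => a + INR k).

Definition gbinom (x : R) (m : nat) : R :=
  prodR m (fun k => x - INR k) / INR (fact m).

Definition alpha : R := PI / 6.

Definition S1 (t : nat) : R :=
  sumR 1 t (fun s =>
    (-1) ^ s * rising (/2 - INR s) (S s) / INR s *
    sumR 1 s (fun u =>
      (-1) ^ u * rising (- INR s) u
        / (INR (fact (s + u)) * INR (fact (2 * u - 1)))
        * (PI ^ 2 / 36) ^ u)).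

(* Write b_j(t) = C(2t, t+j) / 4^t and w_u = (π²/36)^u / (2u-1)!.  The (s,u) summand of
   S_1 is b_u(s) w_u / (2s), and the sum over s telescopes:
   u Σ_{s<=t} b_u(s)/s = 1 - G_u(t) with G_u(t) = Σ_{j<u} (b_j(t) + b_{j+1}(t)).
   As (-1)^t binom(-3/2, t) = (2t+1) b_0(t), cosh α - 1 = Σ w_u/(2u) and
   α sinh α = Σ w_u, the quantity to bound is
   Σ_{u>=1} w_u (1/(2t) - G_u(t) / (2u (2t+1) b_0(t))).
   From b_0 (1 - j²/t) <= b_j <= b_0 each bracket lies in [0, (1+u²)/(4t²)], and
   w_u (1+u²) <= 2 (π²/36)^u sums to at most 8/5, so the quantity lies in [0, 2/(5t²)]. *)

From Stdlib Require Import List Reals Factorial Lra Lia Psatz.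
Open Scope R_scope.

Fixpoint rsum (n : nat) (f : nat -> R) : R :=
  match n with O => 0 | S n' => rsum n' f + f n' end.

Lemma rsum_ext n f g : (forall k, (k < n)%nat -> f k = g k) -> rsum n f = rsum n g.
Proof.
  induction n as [|n IH]; intros H; simpl; [reflexivity|].
  rewrite H by lia. rewrite IH by (intros; apply H; lia). reflexivity.
Qed.

Lemma rsum_plus n f g : rsum n (fun k => f k + g k) = rsum n f + rsum n g.
Proof. induction n as [|n IH]; simpl; [ring|]. rewrite IH; ring. Qed.

Lemma rsum_scal n c f : rsum n (fun k => c * f k) = c * rsum n f.
Proof. induction n as [|n IH]; simpl; [ring|]. rewrite IH; ring. Qed.

Lemma rsum_opp n f : rsum n (fun k => - f k) = - rsum n f.
Proof. induction n as [|n IH]; simpl; [ring|]. rewrite IH; ring. Qed.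

Lemma rsum_le n f g : (forall k, f k <= g k) -> rsum n f <= rsum n g.
Proof. intros H; induction n as [|n IH]; simpl; [lra|]. specialize (H n). lra. Qed.

Lemma rsum_nonneg n f : (forall k, 0 <= f k) -> 0 <= rsum n f.
Proof. intros H; induction n as [|n IH]; simpl; [lra|]. specialize (H n). lra. Qed.

Lemma rsum_shift n f : rsum (S n) f = f 0%nat + rsum n (fun k => f (S k)).
Proof. induction n as [|n IH]; simpl in *; [ring|]. rewrite IH; ring. Qed.

Lemma rsum_swap n m (f : nat -> nat -> R) :
  rsum n (fun i => rsum m (f i)) = rsum m (fun j => rsum n (fun i => f i j)).
Proof.
  induction n as [|n IH]; simpl.
  - induction m as [|m IHm]; simpl; [reflexivity|]. rewrite <- IHm; ring.
  - rewrite IH, <- rsum_plus. reflexivity.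
Qed.

Lemma rsum_trunc n N f : (forall k, (n <= k)%nat -> f k = 0) -> (n <= N)%nat ->
  rsum N f = rsum n f.
Proof.
  intros H HN. induction HN as [|N HN IH]; simpl; [reflexivity|]. rewrite IH, H by lia; ring.
Qed.

Lemma fold_right_seq a n f :
  fold_right Rplus 0 (map f (seq a n)) = rsum n (fun k => f (a + k)%nat).
Proof.
  revert a; induction n as [|n IH]; intros a; [reflexivity|].
  rewrite rsum_shift; simpl. rewrite IH, Nat.add_0_r.
  f_equal; apply rsum_ext; intros k _; f_equal; lia.
Qed.

Lemma sumR_rsum t f : sumR 1 t f = rsum t (fun k => f (S k)).
Proof. unfold sumR. rewrite Nat.sub_1_r, fold_right_seq. reflexivity. Qed.

(* [cbin j t = C(2t, t+j) / 4^t], given by its value at [j = 0] and the ratio of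
   consecutive terms; the factor [t - j] makes it vanish for [j > t]. *)
Fixpoint cbin (j t : nat) : R :=
  match j with
  | O => prodR t (fun k => (2 * INR k + 1) / (2 * INR k + 2))
  | S i => cbin i t * (INR t - INR i) / (INR t + INR i + 1)
  end.

Lemma cbin_succ j t : cbin (S j) t * (INR t + INR j + 1) = cbin j t * (INR t - INR j).
Proof. pose proof (pos_INR t); pose proof (pos_INR j). simpl; field; lra. Qed.

Lemma cbin0_pos t : 0 < cbin 0 t.
Proof.
  induction t as [|t IH]; simpl; [lra|].
  pose proof (pos_INR t). apply Rmult_lt_0_compat; [exact IH|].
  apply Rdiv_lt_0_compat; lra.
Qed.

Lemma cbin_gt j t : (t < j)%nat -> cbin j t = 0.
Proof.
  induction 1 as [|j Hj IH]; simpl.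
  - rewrite Rminus_diag; unfold Rdiv; ring.
  - rewrite IH; unfold Rdiv; ring.
Qed.

Lemma cbin_nonneg j t : 0 <= cbin j t.
Proof.
  destruct (Nat.le_gt_cases j t) as [Hj|Hj]; [|rewrite cbin_gt by lia; lra].
  induction j as [|j IH]; [apply Rlt_le, cbin0_pos|].
  assert (INR j < INR t) by (apply lt_INR; lia). pose proof (pos_INR j).
  simpl. apply Rmult_le_pos; [apply Rmult_le_pos; [apply IH; lia|lra]|].
  apply Rlt_le, Rinv_0_lt_compat; lra.
Qed.

Lemma cbin_le0 j t : cbin j t <= cbin 0 t.
Proof.
  induction j as [|j IH]; [lra|].
  pose proof (cbin_succ j t); pose proof (cbin_nonneg j t); pose proof (cbin_nonneg (S j) t).
  pose proof (pos_INR t); pose proof (pos_INR j). nra.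
Qed.

Lemma cbin_lower j t : (1 <= t)%nat -> cbin 0 t * (1 - INR j ^ 2 / INR t) <= cbin j t.
Proof.
  intros Ht. assert (HT : 1 <= INR t) by (apply (le_INR 1); lia).
  pose proof (cbin0_pos t) as Hb.
  induction j as [|j IH]; [simpl; unfold Rdiv; lra|].
  pose proof (cbin_succ j t) as Hs; pose proof (cbin_nonneg (S j) t).
  pose proof (pos_INR j). rewrite S_INR.
  set (J := INR j) in *; set (T := INR t) in *.
  destruct (Rle_lt_dec T ((J + 1) ^ 2)) as [Hl|Hl].
  - assert (0 <= ((J + 1) ^ 2 - T) / T) by (apply Rle_mult_inv_pos; lra).
    assert ((J + 1) ^ 2 / T - 1 = ((J + 1) ^ 2 - T) / T) by (field; lra).
    nra.
  - apply (Rmult_le_reg_r (T * (T + J + 1))); [nra|].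
    replace (cbin 0 t * (1 - (J + 1) ^ 2 / T) * (T * (T + J + 1)))
      with (cbin 0 t * (T - (J + 1) ^ 2) * (T + J + 1)) by (field; lra).
    replace (cbin (S j) t * (T * (T + J + 1))) with (T * (cbin j t * (T - J))) by (rewrite <- Hs; ring).
    assert (cbin 0 t * (T - J ^ 2) <= T * cbin j t)
      by (replace (cbin 0 t * (T - J ^ 2)) with (T * (cbin 0 t * (1 - J ^ 2 / T))) by (field; lra); nra).
    assert (HJ : 0 < T - J) by nra.
    assert (cbin 0 t * (T - J ^ 2) * (T - J) <= T * cbin j t * (T - J)) by (apply Rmult_le_compat_r; lra).
    assert (0 <= cbin 0 t * (J ^ 3 + (J + 1) ^ 3)) by (apply Rmult_le_pos; nra).
    nra.
Qed.

Lemma cbin_succ_t j t :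
  2 * (INR t + 1 + INR j) * (INR t + 1 - INR j) * cbin j (S t)
  = (2 * INR t + 1) * (INR t + 1) * cbin j t.
Proof.
  pose proof (pos_INR t).
  induction j as [|j IH].
  - simpl. field; lra.
  - pose proof (pos_INR j).
    change (cbin (S j) (S t)) with (cbin j (S t) * (INR (S t) - INR j) / (INR (S t) + INR j + 1)).
    change (cbin (S j) t) with (cbin j t * (INR t - INR j) / (INR t + INR j + 1)).
    rewrite !S_INR in *.
    apply (Rmult_eq_reg_r (INR t + INR j + 1)); [|lra].
    replace ((2 * INR t + 1) * (INR t + 1) * (cbin j t * (INR t - INR j) / (INR t + INR j + 1))
             * (INR t + INR j + 1))
      with ((2 * INR t + 1) * (INR t + 1) * cbin j t * (INR t - INR j)) by (field; lra).
    rewrite <- IH by lra. field; lra.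
Qed.

Lemma cbin_pair_succ_t u t :
  (cbin u t + cbin (S u) t) - (cbin u (S t) + cbin (S u) (S t))
  = (INR (S u) * cbin (S u) (S t) - INR u * cbin u (S t)) / INR (S t).
Proof.
  pose proof (pos_INR t); pose proof (pos_INR u). rewrite !S_INR.
  assert (absorb : 2 * (INR t + 1 - INR u) * cbin u (S t) = (INR t + 1) * (cbin u t + cbin (S u) t)).
  { apply (Rmult_eq_reg_r (INR t + 1 + INR u)); [|lra].
    transitivity ((2 * INR t + 1) * (INR t + 1) * cbin u t); [rewrite <- cbin_succ_t; ring|].
    replace ((INR t + 1) * (cbin u t + cbin (S u) t) * (INR t + 1 + INR u))
      with ((INR t + 1) * (cbin u t * (INR t + 1 + INR u) + cbin (S u) t * (INR t + INR u + 1))) by ring.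
    rewrite cbin_succ. ring. }
  assert (shift : (INR t + 2 + INR u) * cbin (S u) (S t) = (INR t + 1 - INR u) * cbin u (S t)).
  { pose proof (cbin_succ u (S t)) as E. rewrite S_INR in E. lra. }
  apply (Rmult_eq_reg_r (INR t + 1)); [|lra].
  unfold Rdiv. rewrite Rmult_assoc, Rinv_l, Rmult_1_r by lra. lra.
Qed.

Definition cbin_window (u t : nat) : R := rsum u (fun j => cbin j t + cbin (S j) t).

Lemma cbin_window_succ_t u t :
  cbin_window u t - cbin_window u (S t) = INR u * cbin u (S t) / INR (S t).
Proof.
  assert (0 < INR (S t)) by apply lt_0_INR, Nat.lt_0_succ.
  unfold cbin_window. induction u as [|u IH]; cbn [rsum]; [rewrite INR_0; unfold Rdiv; ring|].
  replace (rsum u (fun j => cbin j t + cbin (S j) t) + (cbin u t + cbin (S u) t)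
           - (rsum u (fun j => cbin j (S t) + cbin (S j) (S t)) + (cbin u (S t) + cbin (S u) (S t))))
    with ((rsum u (fun j => cbin j t + cbin (S j) t) - rsum u (fun j => cbin j (S t) + cbin (S j) (S t)))
          + ((cbin u t + cbin (S u) t) - (cbin u (S t) + cbin (S u) (S t)))) by ring.
  rewrite IH, cbin_pair_succ_t. field; lra.
Qed.

Lemma cbin_window_0 u : (1 <= u)%nat -> cbin_window u 0 = 1.
Proof.
  intros Hu. unfold cbin_window.
  rewrite (rsum_trunc 1 u); [simpl; lra | | exact Hu].
  intros k Hk. rewrite !cbin_gt by lia. ring.
Qed.

Lemma cbin_harmonic_sum u t : (1 <= u)%nat ->
  INR u * rsum t (fun s => cbin u (S s) / INR (S s)) = 1 - cbin_window u t.
Proof.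
  intros Hu. induction t as [|t IH]; cbn [rsum].
  - rewrite cbin_window_0 by exact Hu. ring.
  - pose proof (cbin_window_succ_t u t).
    replace (INR u * (rsum t (fun s => cbin u (S s) / INR (S s)) + cbin u (S t) / INR (S t)))
      with (INR u * rsum t (fun s => cbin u (S s) / INR (S s)) + INR u * cbin u (S t) / INR (S t))
      by (unfold Rdiv; ring).
    lra.
Qed.

Lemma cbin_window_le u t : cbin_window u t <= 2 * INR u * cbin 0 t.
Proof.
  unfold cbin_window. induction u as [|u IH]; cbn [rsum]; [simpl; lra|].
  pose proof (cbin_le0 u t); pose proof (cbin_le0 (S u) t). rewrite S_INR. lra.
Qed.

Lemma cbin_window_ge u t : (1 <= t)%nat ->
  cbin 0 t * (2 * INR u - INR u ^ 3 / INR t) <= cbin_window u t.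
Proof.
  intros Ht. assert (HT : 0 < INR t) by (apply lt_0_INR; lia).
  pose proof (cbin0_pos t). unfold cbin_window.
  induction u as [|u IH]; cbn [rsum]; [simpl; unfold Rdiv; lra|].
  pose proof (cbin_lower u t Ht); pose proof (cbin_lower (S u) t Ht).
  rewrite S_INR in *. pose proof (pos_INR u).
  assert (0 <= cbin 0 t * ((INR u ^ 2 + INR u) / INR t))
    by (apply Rmult_le_pos; [lra|]; apply Rmult_le_pos; [nra|]; apply Rlt_le, Rinv_0_lt_compat; lra).
  assert (E : cbin 0 t * (2 * (INR u + 1) - (INR u + 1) ^ 3 / INR t)
    = cbin 0 t * (2 * INR u - INR u ^ 3 / INR t) + cbin 0 t * (1 - INR u ^ 2 / INR t)
      + cbin 0 t * (1 - (INR u + 1) ^ 2 / INR t) - cbin 0 t * ((INR u ^ 2 + INR u) / INR t))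
    by (field; lra).
  lra.
Qed.

Lemma fact_succ_INR n : INR (fact (S n)) = INR (S n) * INR (fact n).
Proof. apply mult_INR. Qed.

Lemma fact_pos_INR n : 0 < INR (fact n).
Proof. apply lt_0_INR, lt_O_fact. Qed.

Lemma gbinom_m3half t : (-1) ^ t * gbinom (-3/2) t = (2 * INR t + 1) * cbin 0 t.
Proof.
  unfold gbinom. pose proof (fact_pos_INR t).
  apply (Rmult_eq_reg_r (INR (fact t))); [|lra].
  replace ((-1) ^ t * (prodR t (fun k => -3/2 - INR k) / INR (fact t)) * INR (fact t))
    with ((-1) ^ t * prodR t (fun k => -3/2 - INR k)) by (field; lra).
  clear H. induction t as [|t IH]; [simpl; ring|].
  change (prodR (S t) (fun k => -3/2 - INR k)) with (prodR t (fun k => -3/2 - INR k) * (-3/2 - INR t)).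
  change (cbin 0 (S t)) with (cbin 0 t * ((2 * INR t + 1) / (2 * INR t + 2))).
  rewrite fact_succ_INR, <- tech_pow_Rmult.
  replace (-1 * (-1) ^ t * (prodR t (fun k => -3/2 - INR k) * (-3/2 - INR t)))
    with ((-1) ^ t * prodR t (fun k => -3/2 - INR k) * (INR t + 3/2)) by field.
  rewrite IH. pose proof (pos_INR t). rewrite !S_INR. field; lra.
Qed.

Lemma rising_shift a m : rising a (S m) = a * rising (a + 1) m.
Proof.
  induction m as [|m IH]; [unfold rising; simpl; ring|].
  change (rising a (S (S m))) with (rising a (S m) * (a + INR (S m))).
  change (rising (a + 1) (S m)) with (rising (a + 1) m * (a + 1 + INR m)).
  rewrite IH, S_INR. ring.
Qed.

Lemma rising_half s : (-1) ^ s * rising (/2 - INR s) (S s) = INR (fact s) * cbin 0 s / 2.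
Proof.
  induction s as [|s IH]; [unfold rising; simpl; field|].
  rewrite rising_shift, fact_succ_INR, <- tech_pow_Rmult.
  replace (/ 2 - INR (S s) + 1) with (/ 2 - INR s) by (rewrite S_INR; ring).
  replace (-1 * (-1) ^ s * ((/ 2 - INR (S s)) * rising (/ 2 - INR s) (S s)))
    with ((-1) ^ s * rising (/ 2 - INR s) (S s) * (INR (S s) - / 2)) by ring.
  rewrite IH. change (cbin 0 (S s)) with (cbin 0 s * ((2 * INR s + 1) / (2 * INR s + 2))).
  pose proof (pos_INR s). rewrite S_INR. field; lra.
Qed.

Lemma rising_neg s u :
  (-1) ^ u * rising (- INR s) u * (INR (fact s) * cbin 0 s) = INR (fact (s + u)) * cbin u s.
Proof.
  induction u as [|u IH]; [rewrite Nat.add_0_r; unfold rising; simpl; ring|].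
  rewrite Nat.add_succ_r, fact_succ_INR, <- tech_pow_Rmult.
  change (rising (- INR s) (S u)) with (rising (- INR s) u * (- INR s + INR u)).
  replace (-1 * (-1) ^ u * (rising (- INR s) u * (- INR s + INR u)) * (INR (fact s) * cbin 0 s))
    with ((-1) ^ u * rising (- INR s) u * (INR (fact s) * cbin 0 s) * (INR s - INR u)) by ring.
  rewrite IH, Rmult_assoc, <- cbin_succ, S_INR, plus_INR. ring.
Qed.

Definition alpha_coef (u : nat) : R := (PI ^ 2 / 36) ^ u / INR (fact (2 * u - 1)).

Lemma S1_summand s u : (1 <= s)%nat ->
  (-1) ^ s * rising (/2 - INR s) (S s) / INR s *
   ((-1) ^ u * rising (- INR s) u / (INR (fact (s + u)) * INR (fact (2 * u - 1))) * (PI ^ 2 / 36) ^ u)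
  = cbin u s / (2 * INR s) * alpha_coef u.
Proof.
  intros Hs. assert (0 < INR s) by (apply lt_0_INR; lia).
  pose proof (fact_pos_INR (s + u)); pose proof (fact_pos_INR (2 * u - 1)).
  rewrite rising_half.
  transitivity ((-1) ^ u * rising (- INR s) u * (INR (fact s) * cbin 0 s)
                / (2 * INR s * INR (fact (s + u)) * INR (fact (2 * u - 1))) * (PI ^ 2 / 36) ^ u).
  { field; lra. }
  rewrite rising_neg. unfold alpha_coef. field; lra.
Qed.

Lemma S1_rsum t N : (t <= N)%nat ->
  S1 t = rsum N (fun v => alpha_coef (S v) / 2 * (1 - cbin_window (S v) t) / INR (S v)).
Proof.
  intros HN. unfold S1. rewrite sumR_rsum.
  rewrite (rsum_ext t _
    (fun k => rsum N (fun v => cbin (S v) (S k) / (2 * INR (S k)) * alpha_coef (S v)))).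
  2: { intros k Hk. rewrite sumR_rsum, <- rsum_scal.
       rewrite (rsum_trunc (S k) N (fun v => cbin (S v) (S k) / (2 * INR (S k)) * alpha_coef (S v))).
       - apply rsum_ext. intros v _. apply S1_summand. lia.
       - intros v Hv. rewrite cbin_gt by lia. unfold Rdiv; ring.
       - lia. }
  rewrite rsum_swap. apply rsum_ext. intros v _.
  assert (0 < INR (S v)) by (apply lt_0_INR; lia).
  rewrite <- (cbin_harmonic_sum (S v) t) by lia.
  rewrite (rsum_ext t _ (fun k => alpha_coef (S v) / 2 * (cbin (S v) (S k) / INR (S k)))).
  2: { intros k _. assert (0 < INR (S k)) by (apply lt_0_INR; lia). field; lra. }
  rewrite rsum_scal. field; lra.
Qed.

Lemma Un_cv_const c : Un_cv (fun _ => c) c.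
Proof. intros eps Heps. exists 0%nat. intros. unfold Rdist. rewrite Rminus_diag, Rabs_R0. lra. Qed.

Lemma Un_cv_affine u l c d : Un_cv u l -> Un_cv (fun n => c * u n + d) (c * l + d).
Proof. intros H. apply CV_plus; [apply CV_mult; [apply Un_cv_const | exact H] | apply Un_cv_const]. Qed.

Lemma Un_cv_subseq u l (phi : nat -> nat) :
  Un_cv u l -> (forall n, (n <= phi n)%nat) -> Un_cv (fun n => u (phi n)) l.
Proof.
  intros H Hphi eps Heps. destruct (H eps Heps) as [N HN].
  exists N. intros n Hn. apply HN. specialize (Hphi n). unfold ge in *. lia.
Qed.

Lemma exp_partial_even a M :
  sum_f_R0 (fun i => / INR (fact i) * a ^ i) (2 * M)
  = 1 + rsum M (fun v => a ^ S (2 * v) / INR (fact (S (2 * v))))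
      + rsum M (fun v => a ^ (2 * S v) / INR (fact (2 * S v))).
Proof.
  induction M as [|M IH]; [simpl; field|].
  cbn [rsum]. replace (2 * S M)%nat with (S (S (2 * M))) by lia.
  cbn [sum_f_R0]. rewrite IH. unfold Rdiv. ring.
Qed.

Lemma exp_partial_even_opp a M :
  sum_f_R0 (fun i => / INR (fact i) * (- a) ^ i) (2 * M)
  = 1 - rsum M (fun v => a ^ S (2 * v) / INR (fact (S (2 * v))))
      + rsum M (fun v => a ^ (2 * S v) / INR (fact (2 * S v))).
Proof.
  rewrite exp_partial_even. unfold Rminus. rewrite <- rsum_opp.
  assert (Hsq : (- a) ^ 2 = a ^ 2) by ring.
  f_equal; [f_equal|]; apply rsum_ext; intros v _.
  - change ((- a) ^ S (2 * v)) with (- a * (- a) ^ (2 * v)).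
    change (a ^ S (2 * v)) with (a * a ^ (2 * v)).
    rewrite !pow_mult, Hsq. unfold Rdiv. ring.
  - rewrite !pow_mult, Hsq. reflexivity.
Qed.

Lemma exp_partial_cv a : Un_cv (fun M => sum_f_R0 (fun i => / INR (fact i) * a ^ i) (2 * M)) (exp a).
Proof.
  apply (Un_cv_subseq (fun n => sum_f_R0 (fun i => / INR (fact i) * a ^ i) n)); [|intros; lia].
  exact (proj2_sig (exist_exp a)).
Qed.

Lemma cosh_series a :
  Un_cv (fun M => rsum M (fun v => a ^ (2 * S v) / INR (fact (2 * S v)))) (cosh a - 1).
Proof.
  pose proof (Un_cv_affine _ _ (/ 2) (- 1) (CV_plus _ _ _ _ (exp_partial_cv a) (exp_partial_cv (- a)))) as H.
  replace (/ 2 * (exp a + exp (- a)) + -1) with (cosh a - 1) in H by (unfold cosh; field).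
  refine (Un_cv_ext _ _ _ _ H). intros M.
  rewrite exp_partial_even, exp_partial_even_opp. field.
Qed.

Lemma sinh_series a :
  Un_cv (fun M => rsum M (fun v => a ^ S (2 * v) / INR (fact (S (2 * v))))) (sinh a).
Proof.
  pose proof (Un_cv_affine _ _ (/ 2) 0 (CV_minus _ _ _ _ (exp_partial_cv a) (exp_partial_cv (- a)))) as H.
  replace (/ 2 * (exp a - exp (- a)) + 0) with (sinh a) in H by (unfold sinh; field).
  refine (Un_cv_ext _ _ _ _ H). intros M.
  rewrite exp_partial_even, exp_partial_even_opp. field.
Qed.

Lemma alpha_sq : alpha ^ 2 = PI ^ 2 / 36.
Proof. unfold alpha. field. Qed.

Lemma alpha_coef_cosh v :
  alpha_coef (S v) / (2 * INR (S v)) = alpha ^ (2 * S v) / INR (fact (2 * S v)).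
Proof.
  unfold alpha_coef. rewrite pow_mult, alpha_sq.
  replace (2 * S v - 1)%nat with (S (2 * v)) by lia.
  replace (2 * S v)%nat with (S (S (2 * v))) by lia.
  rewrite (fact_succ_INR (S (2 * v))). pose proof (fact_pos_INR (S (2 * v))). pose proof (pos_INR v).
  rewrite !S_INR, mult_INR. simpl (INR 2). field. lra.
Qed.

Lemma alpha_coef_sinh v : alpha_coef (S v) = alpha * (alpha ^ S (2 * v) / INR (fact (S (2 * v)))).
Proof.
  unfold alpha_coef. replace (2 * S v - 1)%nat with (S (2 * v)) by lia.
  rewrite <- alpha_sq, <- pow_mult. replace (2 * S v)%nat with (S (S (2 * v))) by lia.
  simpl pow. unfold Rdiv. ring.
Qed.

Lemma cosh_alpha_series :
  Un_cv (fun M => rsum M (fun v => alpha_coef (S v) / (2 * INR (S v)))) (cosh alpha - 1).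
Proof.
  refine (Un_cv_ext _ _ _ _ (cosh_series alpha)). intros M.
  apply rsum_ext. intros v _. symmetry. apply alpha_coef_cosh.
Qed.

Lemma alpha_sinh_series : Un_cv (fun M => rsum M (fun v => alpha_coef (S v))) (alpha * sinh alpha).
Proof.
  pose proof (Un_cv_affine _ _ alpha 0 (sinh_series alpha)) as H. rewrite Rplus_0_r in H.
  refine (Un_cv_ext _ _ _ _ H). intros M.
  rewrite Rplus_0_r, <- rsum_scal. apply rsum_ext. intros v _. symmetry. apply alpha_coef_sinh.
Qed.

Definition err_weight (t u : nat) : R :=
  1 / (2 * INR t) - cbin_window u t / (2 * INR u * ((2 * INR t + 1) * cbin 0 t)).

Lemma err_partial_cv t : (1 <= t)%nat ->
  Un_cv (fun M => rsum M (fun v => alpha_coef (S v) * err_weight t (S v)))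
    (S1 t / ((2 * INR t + 1) * cbin 0 t) - 1 / ((2 * INR t + 1) * cbin 0 t) * (cosh alpha - 1)
     + alpha * sinh alpha / (2 * INR t)).
Proof.
  intros Ht. assert (HT : 0 < INR t) by (apply lt_0_INR; lia).
  set (g := (2 * INR t + 1) * cbin 0 t).
  assert (Hg : 0 < g) by (pose proof (cbin0_pos t); unfold g; nra).
  pose proof (CV_plus _ _ _ _ (Un_cv_affine _ _ (- / g) (S1 t / g) cosh_alpha_series)
                              (Un_cv_affine _ _ (/ (2 * INR t)) 0 alpha_sinh_series)) as H.
  replace (- / g * (cosh alpha - 1) + S1 t / g + (/ (2 * INR t) * (alpha * sinh alpha) + 0))
    with (S1 t / g - 1 / g * (cosh alpha - 1) + alpha * sinh alpha / (2 * INR t)) in H by (field; lra).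
  apply (CV_shift _ t). refine (Un_cv_ext _ _ _ _ (CV_shift' _ t _ H)). intros n. cbv beta.
  rewrite (S1_rsum t (n + t)) by lia.
  transitivity (rsum (n + t) (fun v => - / g * (alpha_coef (S v) / (2 * INR (S v)))
      + / g * (alpha_coef (S v) / 2 * (1 - cbin_window (S v) t) / INR (S v))
      + / (2 * INR t) * alpha_coef (S v))).
  { rewrite !rsum_plus, !rsum_scal. unfold Rdiv. ring. }
  apply rsum_ext. intros v _. unfold err_weight. fold g.
  assert (0 < INR (S v)) by (apply lt_0_INR; lia). field. lra.
Qed.

Lemma err_weight_bounds t u : (1 <= t)%nat -> (1 <= u)%nat ->
  0 <= err_weight t u <= (1 + INR u ^ 2) / (4 * INR t ^ 2).
Proof.
  intros Ht Hu. unfold err_weight.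
  assert (HT : 1 <= INR t) by (apply (le_INR 1); lia).
  assert (HU : 1 <= INR u) by (apply (le_INR 1); lia).
  pose proof (cbin0_pos t). pose proof (cbin_window_le u t). pose proof (cbin_window_ge u t Ht).
  set (T := INR t) in *; set (U := INR u) in *; set (B := cbin 0 t) in *.
  set (r := cbin_window u t / (2 * U * ((2 * T + 1) * B))).
  assert (Hr : r * (2 * U * B) * (2 * T + 1) = cbin_window u t) by (unfold r; field; lra).
  assert (HUB : 0 < 2 * U * B) by nra.
  assert (r_le : r * (2 * T + 1) <= 1) by (apply (Rmult_le_reg_r (2 * U * B)); nra).
  assert (r_ge : 1 - U ^ 2 / (2 * T) <= r * (2 * T + 1)).
  { apply (Rmult_le_reg_r (2 * U * B)); [lra|].
    replace ((1 - U ^ 2 / (2 * T)) * (2 * U * B)) with (B * (2 * U - U ^ 3 / T)) by (field; lra).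
    nra. }
  split.
  - apply (Rmult_le_reg_r (2 * T * (2 * T + 1))); [nra|].
    replace ((1 / (2 * T) - r) * (2 * T * (2 * T + 1))) with (2 * T + 1 - 2 * T * (r * (2 * T + 1)))
      by (field; lra).
    nra.
  - apply (Rmult_le_reg_r (4 * T ^ 2 * (2 * T + 1))); [nra|].
    replace ((1 / (2 * T) - r) * (4 * T ^ 2 * (2 * T + 1)))
      with (2 * T * (2 * T + 1) - 4 * T ^ 2 * (r * (2 * T + 1))) by (field; lra).
    replace ((1 + U ^ 2) / (4 * T ^ 2) * (4 * T ^ 2 * (2 * T + 1))) with ((1 + U ^ 2) * (2 * T + 1))
      by (field; lra).
    assert (4 * T ^ 2 * (1 - U ^ 2 / (2 * T)) = 4 * T ^ 2 - 2 * T * U ^ 2) by (field; lra).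
    nra.
Qed.

Lemma fact_odd_ge v : 1 + INR (S v) ^ 2 <= 2 * INR (fact (S (2 * v))).
Proof.
  induction v as [|v IH]; [simpl; lra|].
  replace (S (2 * S v)) with (S (S (S (2 * v)))) by lia.
  rewrite (fact_succ_INR (S (S (2 * v)))), (fact_succ_INR (S (2 * v))).
  rewrite !S_INR in *. rewrite mult_INR. simpl (INR 2).
  pose proof (pos_INR v). pose proof (fact_pos_INR (S (2 * v))). nra.
Qed.

Lemma alpha_coef_nonneg u : 0 <= alpha_coef u.
Proof.
  unfold alpha_coef. pose proof (fact_pos_INR (2 * u - 1)). pose proof PI_RGT_0.
  apply Rlt_le, Rdiv_lt_0_compat; [apply pow_lt; nra | lra].
Qed.

Lemma alpha_coef_moment v : alpha_coef (S v) * (1 + INR (S v) ^ 2) <= 2 * (PI ^ 2 / 36) ^ S v.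
Proof.
  unfold alpha_coef. replace (2 * S v - 1)%nat with (S (2 * v)) by lia.
  pose proof (fact_pos_INR (S (2 * v))). pose proof (fact_odd_ge v). pose proof PI_RGT_0.
  assert (0 < (PI ^ 2 / 36) ^ S v) by (apply pow_lt; nra).
  apply (Rmult_le_reg_r (INR (fact (S (2 * v))))); [lra|].
  replace ((PI ^ 2 / 36) ^ S v / INR (fact (S (2 * v))) * (1 + INR (S v) ^ 2) * INR (fact (S (2 * v))))
    with ((PI ^ 2 / 36) ^ S v * (1 + INR (S v) ^ 2)) by (field; lra).
  nra.
Qed.

Lemma rsum_geom_le x M : 0 <= x < 1 -> rsum M (fun v => x ^ S v) <= x / (1 - x).
Proof.
  intros Hx.
  assert (E : rsum M (fun v => x ^ S v) * (1 - x) = x - x ^ S M).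
  { induction M as [|M IH]; cbn [rsum]; [simpl; ring|]. rewrite Rmult_plus_distr_r, IH. simpl. ring. }
  assert (0 <= x ^ S M) by (apply pow_le; lra).
  apply (Rmult_le_reg_r (1 - x)); [lra|].
  replace (x / (1 - x) * (1 - x)) with x by (field; lra). lra.
Qed.

Lemma rsum_PI_sq_36_le M : rsum M (fun v => (PI ^ 2 / 36) ^ S v) <= 4 / 5.
Proof.
  assert (Hx : 0 < PI ^ 2 / 36 <= 4 / 9) by (pose proof PI_RGT_0; pose proof PI_4; split; nra).
  eapply Rle_trans; [apply rsum_geom_le; lra|].
  apply (Rmult_le_reg_r (1 - PI ^ 2 / 36)); [lra|].
  replace (PI ^ 2 / 36 / (1 - PI ^ 2 / 36) * (1 - PI ^ 2 / 36)) with (PI ^ 2 / 36) by (field; lra).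
  lra.
Qed.

Lemma err_term_le t v : (1 <= t)%nat ->
  alpha_coef (S v) * err_weight t (S v) <= / (2 * INR t ^ 2) * (PI ^ 2 / 36) ^ S v.
Proof.
  intros Ht. assert (HT0 : 0 < INR t) by (apply lt_0_INR; lia).
  assert (HT : 0 < INR t ^ 2) by (apply pow_lt, HT0).
  destruct (err_weight_bounds t (S v) Ht ltac:(lia)) as [_ HD].
  pose proof (alpha_coef_nonneg (S v)). pose proof (alpha_coef_moment v).
  apply Rle_trans with (alpha_coef (S v) * ((1 + INR (S v) ^ 2) / (4 * INR t ^ 2))).
  - apply Rmult_le_compat_l; lra.
  - replace (alpha_coef (S v) * ((1 + INR (S v) ^ 2) / (4 * INR t ^ 2)))
      with (alpha_coef (S v) * (1 + INR (S v) ^ 2) * / (4 * INR t ^ 2)) by (field; lra).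
    replace (/ (2 * INR t ^ 2) * (PI ^ 2 / 36) ^ S v)
      with (2 * (PI ^ 2 / 36) ^ S v * / (4 * INR t ^ 2)) by (field; lra).
    apply Rmult_le_compat_r; [apply Rlt_le, Rinv_0_lt_compat|]; lra.
Qed.

Lemma err_partial_bounds t M : (1 <= t)%nat ->
  0 <= rsum M (fun v => alpha_coef (S v) * err_weight t (S v)) <= 2 / (5 * INR t ^ 2).
Proof.
  intros Ht. assert (HT0 : 0 < INR t) by (apply lt_0_INR; lia).
  assert (HT : 0 < INR t ^ 2) by (apply pow_lt, HT0).
  split.
  - apply rsum_nonneg. intros v.
    apply Rmult_le_pos; [apply alpha_coef_nonneg | apply err_weight_bounds; lia].
  - eapply Rle_trans; [apply rsum_le; intros v; apply (err_term_le t v Ht)|].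
    rewrite rsum_scal. pose proof (rsum_PI_sq_36_le M).
    replace (2 / (5 * INR t ^ 2)) with (/ (2 * INR t ^ 2) * (4 / 5)) by (field; lra).
    apply Rmult_le_compat_l; [apply Rlt_le, Rinv_0_lt_compat|]; lra.
Qed.

Lemma sign_div t x : (-1) ^ t / x = 1 / ((-1) ^ t * x).
Proof.
  unfold Rdiv. rewrite Rmult_1_l, Rinv_mult, <- pow_inv.
  replace (/ -1) with (-1) by field. reflexivity.
Qed.

Theorem mainTheorem10 (t : nat) (ht : (1 <= t)%nat) :
  - (1 / (8 * INR t ^ 2)) <
    S1 t / ((-1) ^ t * gbinom (-3/2) t)
    - (-1) ^ t / gbinom (-3/2) t * (cosh alpha - 1)
    + alpha * sinh alpha / (2 * INR t)
  /\
    S1 t / ((-1) ^ t * gbinom (-3/2) t)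
    - (-1) ^ t / gbinom (-3/2) t * (cosh alpha - 1)
    + alpha * sinh alpha / (2 * INR t)
  < 13 / (25 * INR t ^ 2).
Proof.
  rewrite sign_div, gbinom_m3half.
  pose proof (err_partial_cv t ht) as Hcv.
  assert (lower := Rle_cv_lim (fun M => proj1 (err_partial_bounds t M ht)) (Un_cv_const 0) Hcv).
  assert (upper := Rle_cv_lim (fun M => proj2 (err_partial_bounds t M ht)) Hcv
                     (Un_cv_const (2 / (5 * INR t ^ 2)))).
  assert (HT0 : 0 < INR t) by (apply lt_0_INR; lia).
  assert (HT : 0 < INR t ^ 2) by (apply pow_lt, HT0).
  assert (0 < 1 / (8 * INR t ^ 2)) by (apply Rdiv_lt_0_compat; lra).
  assert (2 / (5 * INR t ^ 2) < 13 / (25 * INR t ^ 2))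
    by (replace (2 / (5 * INR t ^ 2)) with (10 / (25 * INR t ^ 2)) by (field; lra);
        apply Rmult_lt_compat_r; [apply Rinv_0_lt_compat|]; lra).
  split; lra.
Qed.
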